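(* Let $1\le r\le s\le t$ and let $u=ABCd$, $v=A'B'C'd'$ be vertices of $E3C(r,s,t)$ with $A=A'$, $B=B'$, $C=C'$ and $d\ne d'$. Then there exist $2r+2$ pairwise internally disjoint $u$–$v$ paths in $E3C(r,s,t)$, each of length at most $7$.
   Context: The exchanged 3-ary $n$-cube $E3C(r,s,t)$ ($r,s,t\ge1$, $n=r+s+t+1$): vertices are strings written $x=ABCd$ with $A\in\{0,1,2\}^r$, $B\in\{0,1,2\}^s$, $C\in\{0,1,2\}^t$, $d\in\{0,1,2\}$. Two distinct vertices $x=ABCd$, $y=A'B'C'd'$ are adjacent iff one of: (E0) $A=A',B=B',C=C'$ and $d\ne d'$; (E1) $d=d'=0$, $A=A'$, $B=B'$ and $C,C'$ differ in exactly one position; (E2) $d=d'=1$, $A=A'$, $C=C'$ and $B,B'$ differ in exactly one position; (E3) $d=d'=2$, $B=B'$, $C=C'$ and $A,A'$ differ in exactly one position. Paths are internally disjoint if they share no vertices other than their endpoints; length = number of edges. *)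

From mathcomp Require Import all_boot.
Set Implicit Arguments. Unset Strict Implicit. Unset Printing Implicit Defensive.

Definition e3c_vertex (r s t : nat) : finType :=
  (r.-tuple 'I_3 * s.-tuple 'I_3 * t.-tuple 'I_3 * 'I_3)%type.

Section E3C.
Variables r s t : nat.
Local Notation V := (e3c_vertex r s t).

Definition vA (x : V) : r.-tuple 'I_3 := x.1.1.1.
Definition vB (x : V) : s.-tuple 'I_3 := x.1.1.2.
Definition vC (x : V) : t.-tuple 'I_3 := x.1.2.
Definition vd (x : V) : 'I_3 := x.2.

Definition differ_one (n : nat) (X Y : n.-tuple 'I_3) : bool :=
  #|[set i : 'I_n | tnth X i != tnth Y i]| == 1.

Definition e3c_adj : rel V := fun x y =>
  [|| [&& vA x == vA y, vB x == vB y, vC x == vC y & vd x != vd y]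
    , [&& vd x == 0 :> nat, vd y == 0 :> nat, vA x == vA y, vB x == vB y
        & differ_one (vC x) (vC y)]
    , [&& vd x == 1 :> nat, vd y == 1 :> nat, vA x == vA y, vC x == vC y
        & differ_one (vB x) (vB y)]
    | [&& vd x == 2 :> nat, vd y == 2 :> nat, vB x == vB y, vC x == vC y
        & differ_one (vA x) (vA y)] ].

Definition is_path_uv (u v : V) (p : seq V) : Prop :=
  [/\ head u p = u, last u p = v, p != [::], path e3c_adj (head u p) (behead p)
    & uniq p].

Definition path_length (p : seq V) : nat := (size p).-1.

Definition internal (p : seq V) : seq V := drop 1 (take (size p).-1 p).

Definition int_disjoint (P : seq (seq V)) : Prop :=
  forall i j, i < size P -> j < size P -> i != j ->
    forall x, x \in internal (nth [::] P i) -> x \notin internal (nth [::] P j).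

End E3C.

(* Write u = (w, d) and v = (w, d'), and let e be the third digit.  Besides the
   edge uv and the path u (w, e) v there are, for every position i < r and every
   shift a in {1, 2}, a detour of length 7: add a (mod 3) to coordinate i of the
   part moved by digit d, switch to d', do the same in the part moved by d', switch
   back to d, undo the first shift, switch to d' and undo the second shift.  Since
   r <= s <= t, position i exists in all three parts.  Every internal vertex of that
   detour has digit d or d', agrees with w off position i in these two parts, and
   differs from w at position i by a in at least one of them; so (i, a) can be read
   off any internal vertex, and the 2r detours are internally disjoint from each
   other and from (w, e). *)
From mathcomp Require Import all_boot zify.
Set Implicit Arguments. Unset Strict Implicit. Unset Printing Implicit Defensive.

Definition tshift n (X : n.-tuple 'I_3) (i a : nat) : n.-tuple 'I_3 :=
  [tuple if j == i :> nat then inord ((tnth X j + a) %% 3) else tnth X j | j < n].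

Definition tcoord n (X : n.-tuple 'I_3) (j : nat) : nat := nth ord0 X j.

Lemma tcoord_lt3 n (X : n.-tuple 'I_3) j : tcoord X j < 3.
Proof. exact: ltn_ord. Qed.

Lemma tcoord_shift n (X : n.-tuple 'I_3) i a j : i < n ->
  tcoord (tshift X i a) j = if j == i then (tcoord X j + a) %% 3 else tcoord X j.
Proof.
move=> ltin; rewrite /tcoord; case: (ltnP j n) => [ltjn | lenj].
  rewrite -!(tnth_nth _ _ (Ordinal ltjn)) tnth_mktuple /=.
  by case: (j == i); rewrite ?inordK ?ltn_mod.
rewrite !nth_default ?size_tuple //.
by case: eqP => // eq_ji; move: ltin; rewrite -eq_ji ltnNge lenj.
Qed.

Lemma differ_oneC n (X Y : n.-tuple 'I_3) : differ_one X Y = differ_one Y X.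
Proof. by rewrite /differ_one; congr (_ == 1); apply: eq_card => j; rewrite !inE eq_sym. Qed.

Lemma differ_one_shift n (X : n.-tuple 'I_3) i a : i < n -> a %% 3 != 0 ->
  differ_one X (tshift X i a).
Proof.
move=> ltin a_nz; rewrite /differ_one (_ : [set j | _] = [set Ordinal ltin]) ?cards1 //.
apply/setP => j; rewrite !inE tnth_mktuple -[j == _]val_eqE /=.
case: (eqVneq (val j) i) => [eq_ji | _]; last by rewrite eqxx.
apply/eqP => /(congr1 val); rewrite /= inordK ?ltn_mod //.
have := ltn_ord (tnth X j); lia.
Qed.

Lemma exists_third_digit (d d' : 'I_3) : exists e : 'I_3, (e != d) && (e != d').
Proof.
by case: d d' => [[|[|[|?]]] ?] [[|[|[|?]]] ?] //;
  first [by exists ord0 | by exists (@Ordinal 3 1 isT) | by exists ord_max].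
Qed.

Definition shift_labels (n : nat) : seq (nat * nat) :=
  [seq (i, a) | i <- iota 0 n, a <- [:: 1; 2]].

Lemma size_shift_labels n : size (shift_labels n) = 2 * n.
Proof. by rewrite size_allpairs size_iota mulnC. Qed.

Lemma shift_labels_uniq n : uniq (shift_labels n).
Proof. by rewrite allpairs_uniq ?iota_uniq // => -[? ?] [? ?] _ _ [-> ->]. Qed.

Lemma mem_shift_labels n ia : ia \in shift_labels n -> ia.1 < n /\ 0 < ia.2 < 3.
Proof. by case/allpairsP=> -[i a] [/=]; rewrite mem_iota !inE => /andP[_ ?] /pred2P[]-> ->. Qed.

Section E3CFan.
Variables r s t : nat.
Local Notation W := (r.-tuple 'I_3 * s.-tuple 'I_3 * t.-tuple 'I_3)%type.
Local Notation V := (e3c_vertex r s t).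

Lemma int_disjoint_cons (p : seq V) (P : seq (seq V)) :
  (forall q, q \in P -> forall x, x \in internal p -> x \notin internal q) ->
  int_disjoint P -> int_disjoint (p :: P).
Proof.
move=> disj_p disj_P [|i] [|j] //= lti ltj ne_ij x.
- by apply: disj_p; apply: mem_nth.
- by move=> x_i; apply: contraL x_i; apply: disj_p; apply: mem_nth.
- exact: disj_P.
Qed.

Lemma int_disjoint_map (T : eqType) (f : T -> seq V) (L : seq T) : uniq L ->
  {in L &, forall a b, a != b -> forall x, x \in internal (f a) -> x \notin internal (f b)} ->
  int_disjoint (map f L).
Proof.
case: L => [|a0 L] uniq_L disj i j; rewrite size_map // => lti ltj ne_ij x.
by rewrite !(nth_map a0) //; apply: disj; rewrite ?mem_nth ?nth_uniq.
Qed.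

Lemma int_disjoint_uniq (P : seq (seq V)) :
  int_disjoint P -> all (fun p => internal p != [::]) P -> uniq P.
Proof.
move=> disj /allP nonempty; apply/(uniqP [::]) => i j lti ltj eq_ij.
apply/eqP; apply: contraT => ne_ij.
have := disj i j lti ltj ne_ij; rewrite -eq_ij.
have /nonempty := mem_nth [::] lti; case: (internal _) => // x p _ /(_ x).
by rewrite mem_head => /(_ isT).
Qed.

Lemma e3c_adjC : symmetric (@e3c_adj r s t).
Proof.
move=> x y; rewrite /e3c_adj !(eq_sym (vA x)) !(eq_sym (vB x)) !(eq_sym (vC x)).
rewrite (eq_sym (vd x)) (differ_oneC (vA x)) (differ_oneC (vB x)) (differ_oneC (vC x)).
by rewrite !(andbCA (vd x == _ :> nat)) !andbA.
Qed.

Lemma e3c_adj_digit (w : W) (e e' : 'I_3) : e != e' -> e3c_adj ((w, e) : V) (w, e').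
Proof. by move=> ne_ee'; rewrite /e3c_adj /vA /vB /vC /vd /= !eqxx ne_ee'. Qed.

(* Within digit [e], edges change the part [C], [B] or [A] for [e = 0, 1, 2]. *)
Definition shift (e : 'I_3) (i a : nat) (w : W) : W :=
  match val e with
  | 0 => (w.1.1, w.1.2, tshift w.2 i a)
  | 1 => (w.1.1, tshift w.1.2 i a, w.2)
  | _ => (tshift w.1.1 i a, w.1.2, w.2)
  end.

Definition coord (e : 'I_3) (w : W) (j : nat) : nat :=
  match val e with
  | 0 => tcoord w.2 j
  | 1 => tcoord w.1.2 j
  | _ => tcoord w.1.1 j
  end.

Lemma coord_lt3 e w j : coord e w j < 3.
Proof. by rewrite /coord; case: (val e) => [|[|?]]; apply: tcoord_lt3. Qed.

Lemma shiftC e e' i a w : shift e' i a (shift e i a w) = shift e i a (shift e' i a w).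
Proof. by case: e => [[|[|[|?]]] ?] //; case: e' => [[|[|[|?]]] ?]. Qed.

Definition detour (w : W) (d d' : 'I_3) (i a : nat) : seq V :=
  let wd := shift d i a w in let wd' := shift d' i a w in
  [:: (w, d); (wd, d); (wd, d'); (shift d' i a wd, d'); (shift d' i a wd, d);
      (wd', d); (wd', d'); (w, d')].

Definition shifted_at (w : W) (d d' : 'I_3) (i a : nat) (x : V) : Prop :=
  [/\ x.2 = d \/ x.2 = d',
      forall k, k <> i -> coord d x.1 k = coord d w k /\ coord d' x.1 k = coord d' w k,
      coord d x.1 i <> coord d w i \/ coord d' x.1 i <> coord d' w i,
      coord d x.1 i = coord d w i \/ coord d x.1 i = (coord d w i + a) %% 3
    & coord d' x.1 i = coord d' w i \/ coord d' x.1 i = (coord d' w i + a) %% 3].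

Lemma detour_length w d d' i a : path_length (detour w d d' i a) = 7.
Proof. by []. Qed.

Lemma shifted_at_inj w d d' i a i' a' x : 0 < a < 3 -> 0 < a' < 3 ->
  shifted_at w d d' i a x -> shifted_at w d d' i' a' x -> (i, a) = (i', a').
Proof.
move=> a_bd a'_bd [_ _ moved_i cd cd'] [_ fixed' _ cd_a' cd'_a'].
have := coord_lt3 d w i; have := coord_lt3 d' w i => ltq ltp.
case: (eqVneq i i') => [eq_ii' | /eqP ne_ii']; first by subst i'; congr pair; lia.
by have [] := fixed' i ne_ii'; lia.
Qed.

Hypotheses (le_rs : r <= s) (le_st : s <= t).

Lemma coord_shift e e' i a w j : i < r ->
  coord e' (shift e i a w) j =
  if (e' == e) && (j == i) then (coord e w j + a) %% 3 else coord e' w j.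
Proof.
move=> ltir; have ltis : i < s by lia. have ltit : i < t by lia.
by case: e => [[|[|[|?]]] ?] //; case: e' => [[|[|[|?]]] ?] //;
  rewrite -val_eqE /coord /shift /= ?tcoord_shift.
Qed.

Lemma e3c_adj_shift e i a (w : W) : i < r -> a %% 3 != 0 ->
  e3c_adj ((w, e) : V) (shift e i a w, e).
Proof.
move=> ltir a_nz; have ltis : i < s by lia. have ltit : i < t by lia.
by case: e => [[|[|[|?]]] ?] //;
  rewrite /e3c_adj /vA /vB /vC /vd /shift /= !eqxx differ_one_shift ?orbT.
Qed.

Lemma detour_path w d d' i a : i < r -> 0 < a < 3 -> d != d' ->
  is_path_uv ((w, d) : V) (w, d') (detour w d d' i a).
Proof.
move=> ltir a_bd ne_dd'; have a_nz : a %% 3 != 0 by apply/eqP; lia.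
have ne_d'd : d' != d by rewrite eq_sym.
split=> //.
  rewrite /= !e3c_adj_shift // !e3c_adj_digit // shiftC.
  by rewrite e3c_adjC e3c_adj_shift // e3c_adjC e3c_adj_shift.
(* The eight vertices differ in their digit or at position [i] of the parts of [d], [d']. *)
apply: (@map_uniq _ _ (fun x : V => (val x.2, coord d x.1 i, coord d' x.1 i))).
rewrite /= !coord_shift // (negbTE ne_dd') (negbTE ne_d'd) !eqxx /=.
have := coord_lt3 d w i; have := coord_lt3 d' w i => ltq ltp.
rewrite !inE !xpair_eqE !val_eqE (negbTE ne_dd') (negbTE ne_d'd) !eqxx /=.
by apply/and5P; split; apply/negP; lia.
Qed.

Lemma internal_detour w d d' i a x : i < r -> 0 < a < 3 -> d != d' ->
  x \in internal (detour w d d' i a) -> shifted_at w d d' i a x.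
Proof.
move=> ltir a_bd ne_dd'; have ne_d'd : d' != d by rewrite eq_sym.
have := coord_lt3 d w i; have := coord_lt3 d' w i => ltq ltp.
rewrite /internal /=.
by move=> /predU1P[-> | /predU1P[-> | /predU1P[-> | /predU1P[-> | /predU1P[-> |
          /predU1P[-> | //]]]]]]; split=> [| k /eqP/negbTE ne_ki | | |]; auto;
  rewrite /= !coord_shift // ?(negbTE ne_dd') ?(negbTE ne_d'd) ?ne_ki ?eqxx /=; lia.
Qed.

Definition e3c_fan (w : W) (d d' e : 'I_3) : seq (seq V) :=
  [:: [:: (w, d); (w, d')], [:: (w, d); (w, e); (w, d')]
    & [seq detour w d d' ia.1 ia.2 | ia <- shift_labels r]].

Variables (w : W) (d d' e : 'I_3).
Hypotheses (ne_dd' : d != d') (ne_ed : e != d) (ne_ed' : e != d').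

Lemma size_e3c_fan : size (e3c_fan w d d' e) = 2 * r + 2.
Proof. by rewrite /= size_map size_shift_labels addn2. Qed.

Lemma e3c_fan_paths p : p \in e3c_fan w d d' e ->
  is_path_uv ((w, d) : V) (w, d') p /\ path_length p <= 7.
Proof.
rewrite !inE => /predU1P[-> | /predU1P[-> | /mapP[[i a] /mem_shift_labels[lt_ir a_bd] ->]]].
- split=> //; split=> //=.
    by rewrite e3c_adj_digit.
  by rewrite mem_seq1 xpair_eqE (negbTE ne_dd') andbF.
- split=> //; split=> //=.
    by rewrite !e3c_adj_digit // eq_sym.
  by rewrite !inE !xpair_eqE !eqxx /= eq_sym (negbTE ne_ed) (negbTE ne_ed') (negbTE ne_dd').
- by rewrite detour_length; split=> //; apply: detour_path.
Qed.

Lemma detours_int_disjoint :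
  int_disjoint [seq detour w d d' ia.1 ia.2 | ia <- shift_labels r].
Proof.
apply: int_disjoint_map (shift_labels_uniq r) _ => -[i a] [i' a'].
move=> /mem_shift_labels[lt_ir a_bd] /mem_shift_labels[lt_i'r a'_bd] ne x x_in.
apply/negP => /(internal_detour lt_i'r a'_bd ne_dd') x_at'.
have x_at := internal_detour lt_ir a_bd ne_dd' x_in.
by move: ne; rewrite (shifted_at_inj a_bd a'_bd x_at x_at') eqxx.
Qed.

Lemma e3c_fan_int_disjoint : int_disjoint (e3c_fan w d d' e).
Proof.
apply: int_disjoint_cons => [q _ x //|].
apply: int_disjoint_cons detours_int_disjoint => q /mapP[[i a] /mem_shift_labels[lt_ir a_bd] ->].
move=> x; rewrite inE => /eqP->; apply/negP.
move=> /(internal_detour lt_ir a_bd ne_dd')[/= digit_x _ _ _ _].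
by move: ne_ed ne_ed'; case: digit_x => ->; rewrite eqxx.
Qed.

Lemma e3c_fan_uniq : uniq (e3c_fan w d d' e).
Proof.
have size_detour p : p \in [seq detour w d d' ia.1 ia.2 | ia <- shift_labels r] -> size p = 8.
  by case/mapP=> ? _ ->.
rewrite /= inE negb_or (int_disjoint_uniq detours_int_disjoint) ?andbT; last first.
  by apply/allP=> _ /mapP[? _ ->].
rewrite -andbA; apply/and3P; split.
- by apply/eqP=> /(congr1 size).
- by apply/negP=> /size_detour.
- by apply/negP=> /size_detour.
Qed.

End E3CFan.

Theorem lemma14 (r s t : nat) (u v : e3c_vertex r s t) :
  1 <= r -> r <= s -> s <= t ->
  vA u = vA v -> vB u = vB v -> vC u = vC v -> vd u != vd v ->
  exists P : seq (seq (e3c_vertex r s t)),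
    [/\ size P = (2 * r + 2)%N, uniq P,
        (forall p, p \in P -> is_path_uv u v p /\ path_length p <= 7)
      & int_disjoint P].
Proof.
move=> _ le_rs le_st.
case: u v => [w d] [w' d']; rewrite /vA /vB /vC /vd /= => eqA eqB eqC ne_dd'.
have eq_w : w = w' by move: eqA eqB eqC; case: w w' => [[? ?] ?] [[? ?] ?] /= -> -> ->.
subst w'; have [e /andP[ne_ed ne_ed']] := exists_third_digit d d'.
exists (e3c_fan w d d' e); split.
- exact: size_e3c_fan.
- exact: e3c_fan_uniq.
- exact: e3c_fan_paths.
- exact: e3c_fan_int_disjoint.
Qed.
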